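(* Let $(G_1,v_1)$ and $(G_2,v_2)$ be Brill–Noether general once-marked graphs of genera $g_1,g_2$, and let $G$ be the graph of genus $g=g_1+g_2$ obtained from the disjoint union of $G_1$ and $G_2$ by identifying $v_1$ with $v_2$. Then $G$ is Brill–Noether general.
   Context: A graph is a finite, connected, loopless multigraph (parallel edges allowed); its genus is $g=|E(G)|-|V(G)|+1$. A divisor is an element of the free abelian group on $V(G)$. Linear equivalence is generated by chip-firing (firing $w$ subtracts $\mathrm{val}(w)$ chips from $w$ and adds to each other vertex the number of edges joining it to $w$). The rank $r(D)$ is $-1$ if $D$ is not equivalent to an effective divisor, else the largest $r\ge0$ such that $D-E$ is equivalent to an effective divisor for every effective $E$ of degree $r$. A graph $G$ of genus $g$ is Brill–Noether general if for every divisor $D$ and every integer $r$ with $0\le r\le r(D)$, $g-(r+1)(g-\deg D+r)\ge0$. For a vertex $v$ and divisor $D$ on a genus-$g$ graph, $s_i(D,v)=\min\{\ell\in\mathbb Z: r(D+\ell v)\ge i\}$ and $\lambda_i(D,v)=i-s_i(D,v)+g-\deg D$ for $i\ge0$; the Weierstrass partition $\lambda(D,v)=(\lambda_0,\lambda_1,\dots)$ is a nonincreasing sequence of nonnegative integers, finitely many nonzero, and $|\lambda(D,v)|=\sum_i\lambda_i(D,v)$. A once-marked graph $(G,v)$ of genus $g$ is Brill–Noether general if $|\lambda(D,v)|\le g$ for every divisor $D$ on $G$. *)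

From mathcomp Require Import all_boot all_order all_algebra.
Set Implicit Arguments. Unset Strict Implicit. Unset Printing Implicit Defensive.
Import Order.TTheory GRing.Theory Num.Theory.
Local Open Scope ring_scope.

Section Graphs.
Variable V : finType.
Implicit Types (m : V -> V -> nat) (D : V -> int).

Definition is_graph m : Prop :=
  (forall u w, m u w = m w u) /\ (forall u, m u u = 0%N) /\
  (forall u w, connect (fun x y => 0 < m x y)%N u w).

Definition valence m (u : V) : nat := (\sum_(w : V) m u w)%N.

(* number of edges: each edge counted twice in the double sum *)
Definition num_edges m : nat := (\sum_(u : V) \sum_(w : V) m u w)%N./2.

Definition genus m : int := (num_edges m)%:Z - (#|V|)%:Z + 1.

Definition deg D : int := \sum_(u : V) D u.

Definition effective D : Prop := forall u, 0 <= D u.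

(* D' is obtained from D by firing each vertex w exactly f w times *)
Definition lin_equiv m D D' : Prop :=
  exists f : V -> int, forall u,
    D' u = D u - f u * (valence m u)%:Z + \sum_(w : V) f w * (m w u)%:Z.

Definition equiv_effective m D : Prop :=
  exists D', lin_equiv m D D' /\ effective D'.

Definition rank_prop m D (r : nat) : Prop :=
  forall E : V -> nat, (\sum_(u : V) E u)%N = r ->
    equiv_effective m (fun u => D u - (E u)%:Z).

Definition rank_atleast m D (i : nat) : Prop :=
  exists r : nat, (i <= r)%N /\ rank_prop m D r.

Definition BN_general m : Prop :=
  forall (D : V -> int) (r : nat), rank_atleast m D r ->
    0 <= genus m - (r%:Z + 1) * (genus m - deg D + r%:Z).

Definition add_at D (v : V) (l : int) : V -> int :=
  fun u => D u + (if u == v then l else 0).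

Definition is_s m D (v : V) (i : nat) (s : int) : Prop :=
  rank_atleast m (add_at D v s) i /\
  forall l : int, rank_atleast m (add_at D v l) i -> s <= l.

Definition weierstrass m D (v : V) (lam : nat -> int) : Prop :=
  forall i : nat, is_s m D v i (i%:Z + genus m - deg D - lam i).

Definition marked_BN_general m (v : V) : Prop :=
  forall D : V -> int, exists lam : nat -> int, weierstrass m D v lam /\
    exists N : nat, (forall j : nat, (N <= j)%N -> lam j = 0) /\
      \sum_(i < N) lam i <= genus m.

End Graphs.

(* Wedge sum: vertices of G1 together with the vertices of G2 other than v2;
   v2 is identified with v1. *)
Section Wedge.
Variables (V1 V2 : finType) (m1 : V1 -> V1 -> nat) (v1 : V1)
          (m2 : V2 -> V2 -> nat) (v2 : V2).

Definition wedge_vtx : finType := (V1 + {x : V2 | x != v2})%type.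

Definition wedge_mult (a b : wedge_vtx) : nat :=
  match a, b with
  | inl x, inl y => m1 x y
  | inl x, inr y => if x == v1 then m2 v2 (val y) else 0%N
  | inr x, inl y => if y == v1 then m2 (val x) v2 else 0%N
  | inr x, inr y => m2 (val x) (val y)
  end.
End Wedge.
Arguments wedge_vtx : clear implicits.
Arguments wedge_mult : clear implicits.

(* Let D be a divisor of rank at least r on the wedge G = G1 v G2, and let
   D1, D2 be its restrictions to G1 and G2 (the value at the glued vertex is
   kept on the G1 side).  For every 0 <= a <= r, minimality of s_a(D1,v1)
   yields an effective E1 of degree a on G1 such that D1 - E1 + l v1 is
   equivalent to an effective divisor only if l >= s_a(D1,v1); likewise an
   effective E2 of degree r - a on G2 for s_(r-a)(D2,v2).  Since r(D) >= r,
   D - E1 - E2 is equivalent to an effective divisor on G, and restricting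
   the firing script to each side shows that D1 - E1 + l v1 and
   D2 - E2 - l v2 are equivalent to effective divisors for a common integer
   l.  Hence s_a(D1) + s_(r-a)(D2) <= 0, i.e.
        lambda_a(D1) + lambda_(r-a)(D2) >= r + g - deg D.
   Summing over a = 0..r and bounding the partial sums of the two
   Weierstrass partitions by g1 and g2 gives (r+1)(g - deg D + r) <= g,
   using g = g1 + g2 and deg D = deg D1 + deg D2. *)
From mathcomp Require Import all_boot all_order all_algebra.
From mathcomp Require Import ring zify.
From Stdlib Require Import Classical.
Set Implicit Arguments. Unset Strict Implicit. Unset Printing Implicit Defensive.
Import Order.TTheory GRing.Theory Num.Theory.
Local Open Scope ring_scope.

Lemma Posz_sum (I : Type) (r : seq I) (P : pred I) (F : I -> nat) :
  Posz (\sum_(i <- r | P i) F i)%N = \sum_(i <- r | P i) Posz (F i).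
Proof. exact: (big_morph Posz PoszD). Qed.

Lemma sum_split_point (V : finType) (v : V) (R : nmodType) (F : V -> R) :
  \sum_(y : V) F y = F v + \sum_(z : {x : V | x != v}) F (val z).
Proof.
rewrite (bigD1 v) //=; congr (_ + _).
rewrite (reindex_omap (val : {x : V | x != v} -> V) insub); last first.
  by move=> i Pi; rewrite insubT.
by apply: eq_bigl => -[i iA] /=; rewrite insubT ?iA /= eqxx.
Qed.

Lemma partition_partial_sum (lam : nat -> int) (N : nat) (g : int) (r : nat) :
  (forall i, lam i.+1 <= lam i) -> (forall j, (N <= j)%N -> lam j = 0) ->
  \sum_(i < N) lam i <= g -> \sum_(i < r) lam i <= g.
Proof.
move=> noninc vanish total.
have mono i j : (i <= j)%N -> lam j <= lam i.
  move=> /subnK <-; elim: (j - i)%N => // k IH.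
  by rewrite addSn; apply: le_trans IH; apply: noninc.
have lam_ge0 i : 0 <= lam i.
  by rewrite -(vanish (maxn i N)) ?leq_maxr //; apply: mono; apply: leq_maxl.
rewrite -(big_mkord xpredT); have [le_rN | lt_Nr] := leqP r N.
  apply: le_trans total; rewrite -(big_mkord xpredT lam) (big_cat_nat _ le_rN) //=.
  by rewrite lerDl; apply: sumr_ge0 => i _; apply: lam_ge0.
rewrite (big_cat_nat _ (ltnW lt_Nr)) //= big_mkord [X in _ + X]big1_seq ?addr0 // => i.
by rewrite mem_index_iota => /andP[_ /andP[le_Ni _]]; apply: vanish.
Qed.

Section Divisors.
Variable V : finType.
Implicit Types (m : V -> V -> nat) (D : V -> int).

Lemma equiv_effective_ext m D D' : (forall u, D u = D' u) ->
  equiv_effective m D -> equiv_effective m D'.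
Proof.
by move=> eqD [X [[f Hf] effX]]; exists X; split=> //; exists f => u; rewrite Hf eqD.
Qed.

Lemma equiv_effective_addE m D X : effective X -> equiv_effective m D ->
  equiv_effective m (fun u => D u + X u).
Proof.
move=> effX [D' [[f Hf] effD']]; exists (fun u => D' u + X u); split.
  by exists f => u; rewrite Hf; ring.
by move=> u; apply: addr_ge0.
Qed.

(* rank_prop is downward closed in r (on a graph with at least one vertex w):
   extra chips of E can be removed again by adding them back at w. *)
Lemma rank_prop_mono m D (w : V) r r' :
  (r <= r')%N -> rank_prop m D r' -> rank_prop m D r.
Proof.
move=> le_rr' Hr' E degE.
pose X (u : V) : nat := if u == w then (r' - r)%N else 0%N.
have degEX : (\sum_u (E u + X u))%N = r'.
  by rewrite big_split /= degE -big_mkcond /= big_pred1_eq; lia.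
apply: (equiv_effective_ext _ (equiv_effective_addE (X := fun u => (X u)%:Z) _
          (Hr' _ degEX))) => u //=.
by rewrite PoszD; ring.
Qed.

Lemma rank_atleast_prop m D (w : V) i : rank_atleast m D i -> rank_prop m D i.
Proof. by move=> [r [le_ir Hr]]; apply: rank_prop_mono le_ir Hr. Qed.

Lemma rank_prop_sub_point m D v r :
  rank_prop m D r.+1 -> rank_prop m (add_at D v (-1)) r.
Proof.
move=> Hr E degE.
have degEv : (\sum_u (E u + (u == v)))%N = r.+1.
  rewrite big_split /= degE (bigD1 v) //= eqxx big1 ?addn0 ?addn1 //.
  by move=> u /negbTE ->.
apply: (equiv_effective_ext _ (Hr _ degEv)) => u; rewrite /add_at.
by case: (u == v); rewrite /= ?PoszD; ring.
Qed.

(* The Weierstrass partition is nonincreasing, since s_(i+1) >= s_i + 1. *)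
Lemma weierstrass_noninc m D v lam :
  weierstrass m D v lam -> forall i, lam i.+1 <= lam i.
Proof.
move=> Wlam i; have [rk_next _] := Wlam i.+1; have [_ s_min] := Wlam i.
set s := i.+1%:Z + genus m - deg D - lam i.+1.
suff /s_min : rank_atleast m (add_at D v (s - 1)) i by lia.
exists i; split=> // E degE.
apply: (equiv_effective_ext _ (rank_prop_sub_point v (rank_atleast_prop v rk_next) degE)).
by move=> u; rewrite /add_at /s; case: (u == v); ring.
Qed.

Lemma s_lower_bound_witness m D v lam (a : nat) :
  weierstrass m D v lam ->
  exists E : V -> nat, (\sum_u E u)%N = a /\
   forall l : int,
     equiv_effective m (fun u => D u - (E u)%:Z + (if u == v then l else 0)) ->
     a%:Z + genus m - deg D - lam a <= l.
Proof.
move=> Wlam; set s := a%:Z + genus m - deg D - lam a.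
have [_ s_min] := Wlam a.
have [E [degE notE]] : exists E : V -> nat, (\sum_u E u)%N = a /\
    ~ equiv_effective m (fun u => add_at D v (s - 1) u - (E u)%:Z).
  apply: NNPP => noE; suff /s_min : rank_atleast m (add_at D v (s - 1)) a by lia.
  exists a; split=> // E degE; apply: NNPP => notE; apply: noE; by exists E.
exists E; split=> // l HE; rewrite leNgt; apply/negP => lt_ls; apply: notE.
have effX : effective (fun u => if u == v then s - 1 - l else 0).
  by move=> u; case: (u == v) => //; lia.
apply: (equiv_effective_ext _ (equiv_effective_addE effX HE)) => u.
by rewrite /add_at; case: (u == v); ring.
Qed.

(* The double sum of the multiplicities of a loopless symmetric multigraph is
   even (handshake lemma), so num_edges halves it exactly. *)
Lemma double_sum_even m : (forall u w, m u w = m w u) -> (forall u, m u u = 0%N) ->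
  ~~ odd (\sum_(u : V) \sum_(w : V) m u w)%N.
Proof.
move=> msym mloop.
pose lt (u w : V) := (enum_rank u < enum_rank w)%N.
have split_lt : (\sum_u \sum_w m u w =
    \sum_u \sum_(w | lt u w) m u w + \sum_u \sum_(w | lt w u) m u w)%N.
  rewrite -big_split; apply: eq_bigr => u _; rewrite (bigID (lt u)) /=.
  congr (_ + _)%N; rewrite big_mkcond [RHS]big_mkcond; apply: eq_bigr => w _.
  have [->|neq_wu] := eqVneq w u; first by rewrite mloop /lt ltnn.
  rewrite /lt; case: ltngtP => // /val_inj/enum_rank_inj eq_wu.
  by rewrite eq_wu eqxx in neq_wu.
have swap : (\sum_u \sum_(w | lt w u) m u w = \sum_u \sum_(w | lt u w) m u w)%N.
  under eq_bigr => u _ do rewrite big_mkcond.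
  under [RHS]eq_bigr => u _ do rewrite big_mkcond.
  by rewrite exchange_big; apply: eq_bigr => u _; apply: eq_bigr => w _; rewrite msym.
by rewrite split_lt swap addnn odd_double.
Qed.

End Divisors.

Section Wedge.
Variables (V1 V2 : finType) (m1 : V1 -> V1 -> nat) (v1 : V1)
          (m2 : V2 -> V2 -> nat) (v2 : V2).
Local Notation W := (wedge_vtx V1 V2 v2).
Local Notation M := (wedge_mult V1 V2 m1 v1 m2 v2).
Local Notation S2 := {x : V2 | x != v2}.

Lemma sum_wedge (R : nmodType) (F : W -> R) :
  \sum_(a : W) F a = \sum_(x : V1) F (inl x) + \sum_(z : S2) F (inr z).
Proof. exact: big_sumType. Qed.

Lemma valence_wedge_inl x : valence M (inl x) =
  (valence m1 x + (if x == v1 then \sum_(z : S2) m2 v2 (val z) else 0))%N.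
Proof.
rewrite /valence sum_wedge /=; congr (_ + _)%N.
by case: (x == v1) => //; rewrite big1.
Qed.

Lemma valence_wedge_inr z : valence M (inr z) = valence m2 (val z).
Proof.
rewrite /valence sum_wedge /= (sum_split_point v2 (m2 (val z))); congr (_ + _)%N.
by rewrite (bigD1 v1) //= eqxx big1 ?Monoid.mulm1 // => x /negbTE ->.
Qed.

Lemma double_sum_wedge : (\sum_(a : W) \sum_(b : W) M a b =
   \sum_(x : V1) \sum_(y : V1) m1 x y + (\sum_(y : V2) \sum_(w : V2) m2 y w - m2 v2 v2))%N.
Proof.
rewrite sum_wedge.
transitivity (\sum_x valence M (inl x) + \sum_z valence M (inr z))%N; first by [].
under eq_bigr => x _ do rewrite valence_wedge_inl.
under [X in (_ + X)%N]eq_bigr => z _ do rewrite valence_wedge_inr.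
rewrite big_split /= -big_mkcond /= big_pred1_eq /valence.
rewrite (sum_split_point v2 (fun y => \sum_w m2 y w)) /= (sum_split_point v2 (m2 v2)).
set G1_sum := (\sum_(x : V1) _)%N; set flow := (\sum_(z : S2) m2 v2 (val z))%N.
set G2_rest := (\sum_(z : S2) _)%N.
lia.
Qed.

Lemma genus_wedge : is_graph m1 -> is_graph m2 -> genus M = genus m1 + genus m2.
Proof.
move=> [sym1 [loop1 _]] [_ [loop2 _]].
rewrite /genus /num_edges double_sum_wedge loop2 subn0 halfD.
rewrite (negbTE (double_sum_even sym1 loop1)) /= add0n.
have cardW : #|W| = (#|V1| + #|V2|.-1)%N.
  by rewrite /wedge_vtx card_sum card_sig -(cardC1 v2).
have cardV2 : (0 < #|V2|)%N by apply/card_gt0P; exists v2.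
rewrite cardW !PoszD (_ : Posz #|V2|.-1 = Posz #|V2| - 1); first ring.
by move: cardV2; case: #|V2| => // n _; rewrite /= -addn1 PoszD addrK.
Qed.

Definition extend2 (T : Type) (F : S2 -> T) (d : T) (y : V2) : T :=
  if @insub _ (fun x => x != v2) S2 y is Some z then F z else d.

Lemma extend2_v2 T F d : @extend2 T F d v2 = d.
Proof. by rewrite /extend2 insubF ?eqxx. Qed.

Lemma extend2_val T F d z : @extend2 T F d (val z) = F z.
Proof. by rewrite /extend2 valK. Qed.

Lemma V2_ind (P : V2 -> Prop) : P v2 -> (forall z : S2, P (val z)) -> forall y, P y.
Proof.
move=> Pv2 Pz y; have [->|ne] := eqVneq y v2 => //.
exact: (Pz (exist _ y ne)).
Qed.

Definition restrict1 (D : W -> int) : V1 -> int := fun x => D (inl x).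
Definition restrict2 (D : W -> int) : V2 -> int := extend2 (fun z => D (inr z)) 0.

Lemma deg_wedge (D : W -> int) : deg D = deg (restrict1 D) + deg (restrict2 D).
Proof.
rewrite /deg sum_wedge (sum_split_point v2) /restrict2 extend2_v2 add0r.
by congr (_ + _); apply: eq_bigr => z _; rewrite extend2_val.
Qed.

(* Splitting a firing script: if D - E1 - E2 is equivalent to an effective
   divisor on the wedge, then for some integer l, D1 - E1 + l v1 and
   D2 - E2 - l v2 are equivalent to effective divisors on G1 and G2; the
   number l records the net chip flow through the glued vertex. *)
Lemma wedge_split_effective (D : W -> int) (E1 : V1 -> nat) (E2 : V2 -> nat) :
  rank_prop M D ((\sum_x E1 x) + (\sum_y E2 y))%N ->
  exists l : int,
    equiv_effective m1 (fun x => restrict1 D x - (E1 x)%:Z + (if x == v1 then l else 0)) /\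
    equiv_effective m2 (fun y => restrict2 D y - (E2 y)%:Z + (if y == v2 then - l else 0)).
Proof.
move=> rkD.
pose E (a : W) : nat := match a with
  | inl x => (E1 x + (if x == v1 then E2 v2 else 0))%N
  | inr z => E2 (val z) end.
have degE : (\sum_a E a)%N = ((\sum_x E1 x) + (\sum_y E2 y))%N.
  rewrite sum_wedge big_split /= -big_mkcond /= big_pred1_eq (sum_split_point v2 E2).
  by rewrite addnA.
have [D' [[f Hf] effD']] := rkD E degE.
pose f2 := extend2 (fun z => f (inr z)) (f (inl v1)).
pose flow := \sum_(w : V2) f2 w * (m2 w v2)%:Z - f2 v2 * (valence m2 v2)%:Z.
exists (flow - (E2 v2)%:Z); split.
  exists (fun x => D' (inl x)); split; last by move=> x; apply: effD'.
  exists (fun x => f (inl x)) => x.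
  rewrite /restrict1 Hf /= valence_wedge_inl sum_wedge /=.
  have [->|ne] := eqVneq x v1; last first.
    by rewrite !addn0 [X in _ + (_ + X)]big1 ?addr0 // => z _; rewrite mulr0.
  have flow_in : \sum_(z : S2) f2 (val z) * (m2 (val z) v2)%:Z =
                 \sum_(z : S2) f (inr z) * (m2 (val z) v2)%:Z.
    by apply: eq_bigr => z _; rewrite /f2 extend2_val.
  rewrite /flow (sum_split_point v2) flow_in /valence (sum_split_point v2 (m2 v2)).
  rewrite /f2 !extend2_v2 !PoszD !Posz_sum mulrDr mulr_sumr; ring.
exists (extend2 (fun z => D' (inr z)) 0); split; last first.
  by apply: V2_ind => [|z]; rewrite ?extend2_v2 ?extend2_val //; apply: effD'.
exists f2; apply: V2_ind => [|z].
  by rewrite /restrict2 !extend2_v2 eqxx /flow; ring.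
rewrite /restrict2 !extend2_val Hf /= valence_wedge_inr sum_wedge /=.
rewrite (negbTE (valP z)) addr0 /f2 extend2_val (sum_split_point v2) extend2_v2.
under [X in _ = _ + (_ + X)]eq_bigr => z0 _ do rewrite extend2_val.
rewrite (bigD1 v1) //= eqxx big1 ?addr0 => [|x /negbTE ->]; last by rewrite mulr0.
ring.
Qed.

Lemma wedge_partition_bound (D : W -> int) (r a : nat) lam mu :
  (a <= r)%N -> rank_prop M D r ->
  weierstrass m1 (restrict1 D) v1 lam -> weierstrass m2 (restrict2 D) v2 mu ->
  r%:Z + genus m1 + genus m2 - deg (restrict1 D) - deg (restrict2 D)
    <= lam a + mu (r - a)%N.
Proof.
move=> le_ar rkD Wlam Wmu.
have [E1 [degE1 bound1]] := s_lower_bound_witness a Wlam.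
have [E2 [degE2 bound2]] := s_lower_bound_witness (r - a)%N Wmu.
have degE : ((\sum_x E1 x) + (\sum_y E2 y))%N = r by rewrite degE1 degE2 subnKC.
rewrite -degE in rkD; have [l [eff1 eff2]] := wedge_split_effective rkD.
have := bound1 l eff1; have := bound2 (- l) eff2; lia.
Qed.

End Wedge.

Theorem mainTheorem10 (V1 V2 : finType) (m1 : V1 -> V1 -> nat) (v1 : V1)
  (m2 : V2 -> V2 -> nat) (v2 : V2) :
  is_graph m1 -> is_graph m2 ->
  marked_BN_general m1 v1 -> marked_BN_general m2 v2 ->
  BN_general (wedge_mult V1 V2 m1 v1 m2 v2).
Proof.
move=> G1 G2 BN1 BN2 D r rkD.
have rkDr := rank_atleast_prop (inl v1) rkD.
have [lam [Wlam [N1 [vanish1 total1]]]] := BN1 (restrict1 D).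
have [mu [Wmu [N2 [vanish2 total2]]]] := BN2 (restrict2 D).
have sum_lam : \sum_(a < r.+1) lam a <= genus m1.
  exact: partition_partial_sum (weierstrass_noninc Wlam) vanish1 total1.
have sum_mu : \sum_(a < r.+1) mu (r - a)%N <= genus m2.
  rewrite (reindex_inj rev_ord_inj) /=.
  rewrite (eq_bigr (fun a : 'I_r.+1 => mu a)) => [|a _ /=]; last by rewrite subSS subKn // -ltnS.
  exact: partition_partial_sum (weierstrass_noninc Wmu) vanish2 total2.
set K := r%:Z + genus m1 + genus m2 - deg (restrict1 D) - deg (restrict2 D).
have summed : \sum_(a < r.+1) K <= \sum_(a < r.+1) (lam a + mu (r - a)%N).
  by apply: ler_sum => a _; apply: wedge_partition_bound rkDr Wlam Wmu; rewrite -ltnS.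
rewrite [X in _ <= X]big_split /= sumr_const card_ord -mulr_natr natz in summed.
rewrite genus_wedge // (deg_wedge D) /K.
move: (\sum_(a < r.+1) lam a) (\sum_(a < r.+1) mu (r - a)%N) sum_lam sum_mu summed.
move=> total_lam total_mu; nia.
Qed.
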